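(* Any Radon measure $\mu$ of finite mass on a Noetherian Priestley space $(X,\tau,\le)$ is atomic: there is a countable set $F\subset X$ such that $\mu=\sum_{x\in F}\mu(\{x\})\delta_x$ with $\sum_{x\in F}\mu(\{x\})<\infty$.
   Context: A Priestley space is a partially ordered set $(X,\le)$ with a quasi-compact topology $\tau$ such that whenever $y\not\le x$ there is a clopen down-set $U$ (i.e. $z\in U$, $w\le z$ implies $w\in U$) with $x\in U$, $y\notin U$; it is compact Hausdorff. It is Noetherian if the topology $\tau^u$ consisting of all open up-sets is a Noetherian topology, equivalently every decreasing sequence of closed down-sets is eventually stationary. A Radon measure is a positive Borel measure that is inner regular with respect to compact sets. *)

From HB Require Import structures.
From mathcomp Require Import all_boot all_order all_algebra.
From mathcomp Require Import all_classical all_reals all_analysis.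
Set Implicit Arguments. Unset Strict Implicit. Unset Printing Implicit Defensive.
Import Order.TTheory GRing.Theory Num.Theory.
Local Open Scope classical_set_scope.
Local Open Scope ring_scope.

Definition partial_order {X : Type} (le : X -> X -> Prop) :=
  [/\ (forall x, le x x),
      (forall x y, le x y -> le y x -> x = y) &
      (forall x y z, le x y -> le y z -> le x z)].

Definition down_set {X : Type} (le : X -> X -> Prop) (U : set X) :=
  forall z w, U z -> le w z -> U w.

Definition up_set {X : Type} (le : X -> X -> Prop) (U : set X) :=
  forall z w, U z -> le z w -> U w.

Definition priestley_space (X : topologicalType) (le : X -> X -> Prop) :=
  [/\ partial_order le,
      compact [set: X] &
      forall x y : X, ~ le y x ->
        exists U : set X, [/\ clopen U, down_set le U, U x & ~ U y]].

(* The topology tau^u consists of the open up-sets; it is Noetherian iff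
   every increasing sequence of its open sets is eventually stationary. *)
Definition noetherian_priestley (X : topologicalType) (le : X -> X -> Prop) :=
  forall U : nat -> set X,
    (forall n, open (U n) /\ up_set le (U n)) ->
    (forall n, U n `<=` U n.+1) ->
    exists N : nat, forall n, (N <= n)%N -> U n = U N.

Definition borel (X : ptopologicalType) := g_sigma_algebraType (@open X).

Definition radon_measure (X : ptopologicalType) (R : realType)
    (mu : {measure set (borel X) -> \bar R}) :=
  forall A : set (borel X), measurable A ->
    mu A = ereal_sup [set mu K | K in
      [set K : set (borel X) | [/\ measurable K, @compact X K & K `<=` A]]].

From HB Require Import structures.
From mathcomp Require Import all_boot all_order all_algebra.
From mathcomp Require Import all_classical all_reals all_analysis.
From mathcomp Require Import finmap.
Import Order.TTheory GRing.Theory Num.Theory.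
Local Open Scope classical_set_scope.
Local Open Scope ring_scope.

(* In a Noetherian Priestley space every open up-set V is closed: a maximal
   clopen up-set inside V is all of V, because compactness and the Priestley
   axiom give each point of V a clopen up-neighbourhood inside V.  The space is
   therefore scattered: if M is a maximal open up-set omitting a point of S,
   then for each y in S outside M the open up-set M `|` [set w | ~ w <= y]
   omits y, so by maximality every point outside M lies below y; hence S meets
   the open set ~` M in exactly one point.
   For a Radon measure mu and a Borel set B, inner regularity shows that the
   union O of all open G with mu (G `&` B) = 0 satisfies mu (O `&` B) = 0.  If
   B has no atoms and B is not contained in O, an isolated point x of B `\` O
   has an open neighbourhood P with mu (P `&` B) <= mu (O `&` B) + mu [set x]
   = 0, so P is part of O, a contradiction.  Finally a finite measure has only
   countably many atoms F; splitting A into A `\` F and A `&` F gives mu as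
   the sum of its point masses over F. *)

Lemma acc_maximal (T : Type) (Q : set (set T)) (P : set (set T)) :
    (forall U : nat -> set T, (forall n, Q (U n)) -> (forall n, U n `<=` U n.+1) ->
      exists N : nat, forall n, (N <= n)%N -> U n = U N) ->
    P `<=` Q -> P !=set0 ->
  exists2 M, P M & forall W, P W -> M `<=` W -> W = M.
Proof.
move=> acc PQ [M0 PM0]; apply: contrapT => nomax.
have grow M : exists W, P M -> [/\ P W, M `<=` W & W <> M].
  have [PM|] := pselect (P M); last by exists M.
  have [[W ?]|noW] := pselect (exists W, [/\ P W, M `<=` W & W <> M]).
    by exists W.
  exfalso; apply: nomax; exists M => // W PW MW.
  by apply: contrapT => WM; apply: noW; exists W.
have [f fP] := choice grow.
pose U n := iter n f M0.
have PU n : P (U n) by elim: n => //= n IH; have [] := fP _ IH.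
have UU n : U n `<=` U n.+1 by have [] := fP _ (PU n).
have [N UN] := acc U (fun n => PQ _ (PU n)) UU.
by have [_ _] := fP _ (PU N); apply; exact: (UN N.+1).
Qed.

Lemma open_measurable_borel (X : ptopologicalType) (A : set (borel X)) :
  @open X A -> measurable A.
Proof. exact: sub_sigma_algebra. Qed.

Lemma closed_measurable_borel (X : ptopologicalType) (A : set (borel X)) :
  @closed X A -> measurable A.
Proof.
move=> cA; rewrite -[A]setCK; apply: measurableC.
by apply: open_measurable_borel; exact: closed_openC.
Qed.

Section InnerRegularMeasure.
Context {R : realType} {X : ptopologicalType} {mu : {measure set (borel X) -> \bar R}}.
Hypothesis rad : radon_measure mu.

Lemma radon_bigcup_locally_null (B : set (borel X)) : measurable B ->
  mu (\bigcup_(G in [set G : set X | open G /\ mu (G `&` B) = 0%E]) G `&` B) = 0%E.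
Proof.
move=> mB; set GG := [set G | _]; set O := \bigcup_(G in GG) G.
have mOB : measurable (O `&` B : set (borel X)).
  by apply: measurableI mB; apply: open_measurable_borel; apply: bigcup_open => G [].
suff : (mu (O `&` B) <= 0)%E by rewrite measure_le0 => /eqP.
rewrite (rad _ mOB).
apply: ge_ereal_sup => _ [K [mK + KOB] <-]; rewrite compact_cover.
move=> /(_ (set X) GG id (fun G GG_G => GG_G.1) (fun z Kz => (KOB z Kz).1)).
case=> D DGG covK.
have {}DGG G : [set` D] G -> GG G by move=> /DGG /set_mem.
apply: (@le_trans _ _ (\sum_(G \in [set` D]) mu (G `&` B))%E).
  apply: content_sub_fsum => // [G /DGG [oG _]|z Kz].
    by apply: measurableI mB; exact: open_measurable_borel.
  by have [G DG Gz] := covK z Kz; exists G => //; split => //; exact: (KOB z Kz).2.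
by rewrite fsbig1 // => G /DGG [].
Qed.

End InnerRegularMeasure.

Section PriestleySpace.
Context {X : ptopologicalType} {le : X -> X -> Prop}.
Hypothesis pX : priestley_space le.

Lemma priestley_hausdorff : hausdorff_space X.
Proof.
have [[_ le_anti _] _ sep] := pX.
rewrite open_hausdorff => x y xy.
have [yx|nyx] := pselect (le y x).
  have nxy : ~ le x y by move=> xy'; move/eqP: xy; apply; exact: le_anti.
  have [U [[oU cU] _ Uy nUx]] := sep y x nxy.
  exists (~` U, U); first by split; apply/mem_set.
  by split => //=; [rewrite openC | rewrite setICl].
have [U [[oU cU] _ Ux nUy]] := sep x y nyx.
exists (U, ~` U); first by split; apply/mem_set.
by split => //=; [rewrite openC | rewrite setICr].
Qed.

Lemma priestley_measurable_set1 (x : borel X) : measurable [set x].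
Proof.
apply: closed_measurable_borel; apply: accessible_closed_set1.
exact/hausdorff_accessible/priestley_hausdorff.
Qed.

Lemma open_not_le (y : X) : open [set w | ~ le w y].
Proof.
have [_ _ sep] := pX.
have -> : [set w | ~ le w y] =
    \bigcup_(U in [set U | [/\ clopen U, down_set le U & U y]]) ~` U.
  apply/seteqP; split => w /=.
    by move=> nwy; have [U [clU dU Uy nUw]] := sep y w nwy; exists U.
  by move=> [U [_ dU Uy] nUw] wy; apply: nUw; exact: dU wy.
by apply: bigcup_open => U [[_ cU] _ _]; rewrite openC.
Qed.

Lemma clopen_up_set_between {V : set X} {x : X} :
  open V -> up_set le V -> V x ->
  exists W, [/\ clopen W, up_set le W, W x & W `<=` V].
Proof.
move=> oV uV Vx; have [_ cX sep] := pX.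
have : compact (~` V) by apply: subclosed_compact cX _ => //; rewrite closedC.
rewrite compact_cover => /(_ (set X) [set U | [/\ clopen U, down_set le U & ~ U x]] id).
case=> [U [[oU _] _ _] //|z nVz|D DU covD].
  have nxz : ~ le x z by move=> xz; apply: nVz; exact: uV xz.
  by have [U [clU dU Uz nUx]] := sep z x nxz; exists U.
have {}DU U : [set` D] U -> [/\ clopen U, down_set le U & ~ U x].
  by move=> /DU /set_mem.
exists (~` \bigcup_(U in [set` D]) U); split.
- split.
    by rewrite openC bigcup_fset; apply: closed_bigsetU => U /DU [[]].
  by rewrite closedC; apply: bigcup_open => U /DU [[]].
- move=> z w nDz zw [U DUU Uw]; apply: nDz; exists U => //.
  by have [_ dU _] := DU _ DUU; exact: dU zw.
- by move=> [U /DU [_ _ nUx]].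
- by move=> z nDz; apply: contrapT => /covD.
Qed.

Section NoetherianPriestleySpace.
Hypothesis noe : noetherian_priestley le.

Lemma maximal_open_up_set {P : set (set X)} :
  (forall V, P V -> open V /\ up_set le V) -> P !=set0 ->
  exists2 M, P M & forall W, P W -> M `<=` W -> W = M.
Proof. exact: acc_maximal noe. Qed.

Lemma open_up_set_closed (V : set X) : open V -> up_set le V -> closed V.
Proof.
move=> oV uV.
pose P := [set W | [/\ clopen W, up_set le W & W `<=` V]].
have PV W : P W -> open W /\ up_set le W by move=> [[oW _] uW _].
have P0 : P set0 by split => //; exact: clopen0.
have [M [[oM cM] uM MV] Mmax] := maximal_open_up_set PV (ex_intro _ _ P0).
suff -> : V = M by [].
apply/seteqP; split => // x Vx.
have [W [clW uW Wx WV]] := clopen_up_set_between oV uV Vx.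
suff <- : M `|` W = M by right.
apply: Mmax => //; split.
- exact: clopenU.
- by move=> z w [Mz|Wz] zw; [left; exact: uM zw|right; exact: uW zw].
- by move=> z [/MV|/WV].
Qed.

Lemma exists_isolated_point (S : set X) : S !=set0 ->
  exists O x, open O /\ O `&` S = [set x].
Proof.
move=> [s Ss]; have [[le_refl le_anti le_trans] _ _] := pX.
pose P := [set V | [/\ open V, up_set le V & ~ S `<=` V]].
have PV V : P V -> open V /\ up_set le V by move=> [].
have P0 : P set0 by split => //; [exact: open0|move=> /(_ s Ss)].
have [M [oM uM SM] Mmax] := maximal_open_up_set PV (ex_intro _ _ P0).
have below y : S y -> ~ M y -> ~` M `<=` [set w | le w y].
  move=> Sy nMy; pose Vy := [set w | ~ le w y].
  have PMV : P (M `|` Vy).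
    split; first exact: openU (open_not_le y).
      move=> z w [Mz|nzy] zw; first by left; exact: uM zw.
      by right => wy; apply: nzy; exact: le_trans zw wy.
    by move=> /(_ y Sy) [//|]; apply; exact: le_refl.
  move=> w nMw; apply: contrapT => nwy; apply: nMw.
  by rewrite -(Mmax _ PMV (@subsetUl _ M Vy)); right.
have [x [Sx nMx]] : exists x, S x /\ ~ M x.
  apply: contrapT => none; apply: SM => y Sy.
  by apply: contrapT => nMy; apply: none; exists y.
exists (~` M), x; split; first by rewrite openC; exact: open_up_set_closed.
apply/seteqP; split => [y [nMy Sy]|y ->] //=.
by apply: le_anti; [exact: below nMy|exact: below nMx].
Qed.

Section RadonMeasure.
Context {R : realType} {mu : {measure set (borel X) -> \bar R}}.
Hypothesis rad : radon_measure mu.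

Lemma radon_diffuse_null (B : set (borel X)) : measurable B ->
  (forall x, B x -> mu [set x] = 0%E) -> mu B = 0%E.
Proof.
move=> mB B0; have OB0 := radon_bigcup_locally_null rad _ mB.
set O := \bigcup_(G in _) G in OB0.
have mOB : measurable (O `&` B : set (borel X)).
  by apply: measurableI mB; apply: open_measurable_borel; apply: bigcup_open => G [].
suff BO : B `<=` O by rewrite -OB0 setIidr.
move=> b Bb; apply: contrapT => nOb.
have [P [x [oP PBO]]] := exists_isolated_point (B `\` O) (ex_intro _ b (conj Bb nOb)).
have [Px [Bx nOx]] : P x /\ (B `\` O) x by rewrite -[_ /\ _]/((P `&` _) x) PBO.
apply: nOx; exists P => //; split => //.
have mx := priestley_measurable_set1 x.
apply: (@subset_measure0 _ _ _ mu _ (O `&` B `|` [set x])).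
- by apply: measurableI mB; exact: open_measurable_borel.
- exact: measurableU.
- move=> z [Pz Bz]; have [Oz|nOz] := pselect (O z); first by left.
  by right; rewrite -PBO.
- exact: etrans (measureU0 mOB mx (B0 x Bx)) OB0.
Qed.

End RadonMeasure.
End NoetherianPriestleySpace.
End PriestleySpace.

Section SummableSupport.
Local Open Scope ereal_scope.
Context {T : choiceType} {R : realType}.

Lemma summable_countable_support (D : set T) (a : T -> \bar R) :
  summable D a -> countable (D `&` [set x | a x != 0]).
Proof.
move=> Da; have aoo := summable_pinfty Da.
set s := fine (\esum_(x in D) `|a x|).
have sE : \esum_(x in D) `|a x| = s%:E by rewrite fineK -?summableE.
have -> : D `&` [set x | a x != 0] =
    \bigcup_n (D `&` [set x | (n.+1%:R^-1)%:E < `|a x|]).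
  apply/seteqP; split => [x [Dx ax0]|x [n _ [Dx]]]; last first.
    move=> /= lt; split => //; apply: contraTneq lt => ->.
    by rewrite abse0 -leNgt lee_fin invr_ge0.
  have := aoo x Dx; have : 0 < `|a x| by rewrite lt_def abse_eq0 ax0 abse_ge0.
  case ax: `|a x| => [r| |] // r0 _; have [n] := ltr_add_invr r0.
  by rewrite add0r => nr; exists n => //; split => //=; rewrite ax lte_fin.
apply: bigcup_countable => // n _; apply: finite_set_countable.
apply: contrapT => /(infinite_set_fset (Num.truncn (s * n.+1%:R)).+1) [B BD cardB].
have : \sum_(x \in [set` B]) (n.+1%:R^-1 : R)%:E <= s%:E.
  rewrite -sE; apply: esum_ge; exists [set` B].
    by split; [exact: finite_fset|move=> x /BD []].
  by apply: lee_fsum => [|x /BD [_ /ltW]]; first exact: finite_fset.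
rewrite -fsbig_seq // sumEFin lee_fin.
rewrite -[X in (\sum_(_ <- _) X)%R]mulr1 -mulr_sumr.
rewrite (_ : (\sum_(x <- B) 1 = #|` B|%:R)%R); last by rewrite card_fset_sum1 natr_sum.
rewrite ler_pdivrMl ?ltr0n // mulrC => Bs.
have := truncnS_gt (s * n.+1%:R)%R; rewrite ltNge => /negP; apply.
by apply: le_trans Bs; rewrite ler_nat.
Qed.

End SummableSupport.

Section PointMasses.
Local Open Scope ereal_scope.
Context {d} {T : measurableType d} {R : realType} (mu : {measure set T -> \bar R}).
Hypothesis mset1 : forall x : T, measurable [set x].

Lemma esum_set1_le_measure (S A : set T) : measurable A -> S `<=` A ->
  \esum_(x in S) mu [set x] <= mu A.
Proof.
move=> mA SA; apply: ge_ereal_sup => _ [G [finG GS] <-].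
rewrite -measure_fin_bigcup //; last exact: (@trivIset_preimage1 _ _ _ id).
apply: le_measure.
- exact/mem_set/fin_bigcup_measurable.
- exact/mem_set.
- by move=> _ [x Gx ->]; exact/SA/GS.
Qed.

Lemma countable_measure_esum_set1 (S : set T) : countable S ->
  mu S = \esum_(x in S) mu [set x].
Proof.
move=> cS; apply/eqP; rewrite eq_le esum_set1_le_measure ?andbT //; last first.
  exact: countable_measurable.
have [->|/set0P[s Ss]] := eqVneq S set0; first by rewrite measure0 esum_ge0.
have /countable_injP[f injf] := cS; pose g := 'pinv_(cst s) S f.
have gK x : S x -> g (f x) = x by move=> Sx; rewrite /g pinvKV //; exact/mem_set.
have -> : mu S = mu (\bigcup_(n in f @` S) [set g n]).
  congr (mu _).
  apply/seteqP; split => [x Sx|_ [_ [x Sx <-] ->]]; last by rewrite /= gK.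
  by exists (f x); [exists x|rewrite /= gK].
rewrite measure_bigcup //; last first.
  by move=> _ _ [x Sx <-] [y Sy <-] [z [/=]]; rewrite !gK // => -> ->.
rewrite nneseries_esum // (_ : [set n | n \in f @` S] = f @` S); last first.
  by apply/seteqP; split => n /=; [move/set_mem|move/mem_set].
rewrite esum_image; last by move=> x y Sx Sy; apply: injf.
by apply: le_esum => x Sx; rewrite gK.
Qed.

End PointMasses.

Theorem theorem3p8 (R : realType) (X : ptopologicalType) (le : X -> X -> Prop)
  (mu : {measure set (borel X) -> \bar R}) :
  priestley_space le -> noetherian_priestley le ->
  radon_measure mu -> (mu [set: borel X] < +oo)%E ->
  exists F : set (borel X),
    [/\ countable F,
        (\esum_(x in F) mu [set x] < +oo)%E &
        forall A : set (borel X), measurable A ->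
          mu A = \esum_(x in F) (mu [set x] * \d_x A)%E].
Proof.
move=> pX noe rad mu_fin; have mset1 := priestley_measurable_set1 pX.
have esum_fin (S : set (borel X)) : (\esum_(x in S) mu [set x] < +oo)%E.
  exact: le_lt_trans (esum_set1_le_measure mu mset1 _ _ measurableT (subsetT S)) mu_fin.
pose F := [set x : borel X | mu [set x] != 0%E].
have cF : countable F.
  rewrite -[F]setTI; apply: summable_countable_support; rewrite /summable.
  rewrite (eq_esum (b := fun x => mu [set x])) => [|x _]; first exact: esum_fin.
  by rewrite gee0_abs.
exists F; split => [//||A mA]; first exact: esum_fin.
have mF : measurable F := countable_measurable mset1 cF.
have -> : mu A = (mu (A `\` F) + mu (A `&` F))%E by exact: measureDI.
rewrite (radon_diffuse_null pX noe rad (A `\` F)); last first.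
- by move=> x [_ /negP]; rewrite negbK => /eqP.
- exact: measurableD.
rewrite add0e countable_measure_esum_set1 //; last first.
  exact: sub_countable (subset_card_le (@subIsetr _ A F)) cF.
rewrite esum_mkcondl; apply: eq_esum => x _.
by rewrite diracE; case: (x \in A); rewrite ?mule1 ?mule0.
Qed.
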